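(* Let $p:X_2\to X_1$, $q:Y_2\to Y_1$, $s:W_2\to W_1$, $f:X_1\to Y_1$, $g:Y_1\to W_1$, $h:X_2\to Y_2$, $k:Y_2\to W_2$ be equivariant maps with $f\circ p=q\circ h$ and $g\circ q=s\circ k$, such that both squares (square (1): $p,f,h,q$; square (2): $q,g,k,s$) are safe squares, the pair $(f,g)$ is forward-safe and the pair $(h,k)$ is backward-safe. Then the outer square ($p$, $g\circ f$, $k\circ h$, $s$) is a safe square.
   Context: Nominal sets over a countably infinite set $\mathcal V$ of names. For an equivariant $f:X\to Y$: $u$ is $f$-safe if $|\mathsf{supp}(u)|=\max\{|\mathsf{supp}(v)|:v\in f^{-1}(f(u))\}$ (maximum existing); $\mathsf{bv}_f(u)=\mathsf{supp}(u)\setminus\mathsf{supp}(f(u))$; $f$ is safe if every element of $Y$ has an $f$-safe preimage. A commuting square $a:Z\to X$, $f:X\to W$, $b:Z\to Y$, $c:Y\to W$ ($f\circ a=c\circ b$) is a safe square if for every $f$-safe $u\in X$ and $v\in Y$ with $f(u)=c(v)$ and $\mathsf{bv}_f(u)\cap\mathsf{supp}(v)=\emptyset$ there is a $b$-safe $z\in Z$ with $a(z)=u$, $b(z)=v$. For safe maps $f:X\to Y$, $g:Y\to W$: the pair $(f,g)$ is forward-safe if for every $(g\circ f)$-safe $u$, $f(u)$ is $g$-safe; it is backward-safe if every $f$-safe $u$ with $f(u)$ $g$-safe is $(g\circ f)$-safe. *)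

From mathcomp Require Import all_boot.
Set Implicit Arguments. Unset Strict Implicit. Unset Printing Implicit Defensive.

(* Names: the countably infinite set V is taken to be nat. *)

Record fperm := FPerm {
  pfun :> nat -> nat;
  pinv : nat -> nat;
  pfunK : cancel pfun pinv;
  pinvK : cancel pinv pfun;
  pfin : exists n, forall a, n <= a -> pfun a = a
}.

Lemma id_fin : exists n, forall a : nat, n <= a -> id a = a.
Proof. by exists 0. Qed.

Definition perm_id : fperm := @FPerm id id (fun _ => erefl) (fun _ => erefl) id_fin.

Lemma comp_fin (p q : fperm) : exists n, forall a, n <= a -> p (q a) = a.
Proof.
case: (pfin p) => m Hm; case: (pfin q) => n Hn; exists (maxn m n) => a Ha.
rewrite Hn ?Hm //; [exact: leq_trans (leq_maxl m n) Ha | exact: leq_trans (leq_maxr m n) Ha].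
Qed.

Definition perm_comp (p q : fperm) : fperm :=
  @FPerm (fun a => p (q a)) (fun a => pinv q (pinv p a))
    (fun a => etrans (f_equal (pinv q) (pfunK p (q a))) (pfunK q a))
    (fun a => etrans (f_equal p (pinvK q (pinv p a))) (pinvK p a))
    (comp_fin p q).

(* A nominal set: a set with an action of finitely supported permutations
   in which every element has a (least) finite support.  [supp x] is the
   least finite support of x, given as a duplicate-free list; it is uniquely
   determined (as a set) by the axioms [supp_supports] and [supp_least]. *)
Definition supports (X : Type) (act : fperm -> X -> X) (A : seq nat) (x : X) :=
  forall p : fperm, (forall a, a \in A -> p a = a) -> act p x = x.

Record nominal := Nominal {
  carrier :> Type;
  act : fperm -> carrier -> carrier;
  act_id : forall x, act perm_id x = x;
  act_comp : forall p q x, act (perm_comp p q) x = act p (act q x);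
  act_ext : forall (p q : fperm) x, (forall a, p a = q a) -> act p x = act q x;
  supp : carrier -> seq nat;
  supp_uniq : forall x, uniq (supp x);
  supp_supports : forall x, supports act (supp x) x;
  supp_least : forall x (A : seq nat), supports act A x ->
                 forall a, a \in supp x -> a \in A
}.

Definition equivariant (X Y : nominal) (f : X -> Y) :=
  forall (p : fperm) (x : X), f (act p x) = act p (f x).

(* u is f-safe: |supp u| is the maximum of |supp v| over the fibre of f(u)
   (u lies in that fibre, so the maximum exists iff it is attained at u). *)
Definition fsafe (X Y : nominal) (f : X -> Y) (u : X) :=
  forall v : X, f v = f u -> size (supp v) <= size (supp u).

Definition bv (X Y : nominal) (f : X -> Y) (u : X) : seq nat :=
  [seq a <- supp u | a \notin supp (f u)].

Definition safe_map (X Y : nominal) (f : X -> Y) :=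
  forall y : Y, exists2 u : X, f u = y & fsafe f u.

Definition safe_square (Z X Y W : nominal)
    (a : Z -> X) (f : X -> W) (b : Z -> Y) (c : Y -> W) :=
  (forall z, f (a z) = c (b z)) /\
  forall (u : X) (v : Y), fsafe f u -> f u = c v ->
    (forall n, n \in bv f u -> n \notin supp v) ->
    exists z : Z, [/\ fsafe b z, a z = u & b z = v].

Definition forward_safe (X Y W : nominal) (f : X -> Y) (g : Y -> W) :=
  [/\ safe_map f, safe_map g &
      forall u : X, fsafe (fun x => g (f x)) u -> fsafe g (f u)].

Definition backward_safe (X Y W : nominal) (f : X -> Y) (g : Y -> W) :=
  [/\ safe_map f, safe_map g &
      forall u : X, fsafe f u -> fsafe g (f u) -> fsafe (fun x => g (f x)) u].

From mathcomp Require Import all_boot.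

Set Implicit Arguments. Unset Strict Implicit. Unset Printing Implicit Defensive.

(* Let u be (g o f)-safe and v a preimage of g (f u) under s avoiding the
   bound names bv_{g o f}(u).  Then u is f-safe, and by forward safety f u is
   g-safe; since bv_g (f u) is part of bv_{g o f}(u), square (2) yields a
   k-safe y with q y = f u and k y = v.  The obstacle to applying square (1)
   to (u, y) is that y may carry names of u that are visible neither in q y
   nor in k y.  Such "hidden" names can be renamed away by fresh
   transpositions without changing q y, k y or the size of supp y; the
   renamed y' is still k-safe.  Every name of bv_f(u) in supp y' is then
   visible in k y' = v, yet lies in bv_{g o f}(u): impossible.  So square (1)
   gives an h-safe z over (u, y'), and backward safety makes z (k o h)-safe. *)

Lemma pinv_fin (pi : fperm) : exists n, forall a, n <= a -> pinv pi a = a.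
Proof.
case: (pfin pi) => n Hn; exists n => a Ha.
by rewrite -{1}(Hn a Ha) pfunK.
Qed.

Definition perm_inv (pi : fperm) : fperm :=
  @FPerm (pinv pi) pi (pinvK pi) (pfunK pi) (pinv_fin pi).

Lemma supp_act (X : nominal) (pi : fperm) (x : X) a :
  a \in supp (act pi x) -> pinv pi a \in supp x.
Proof.
move=> Ha.
have Hsupports : supports (@act X) (map pi (supp x)) (act pi x).
  move=> sg Hsg; rewrite -act_comp.
  set t := perm_comp (perm_inv pi) (perm_comp sg pi).
  have -> : act (perm_comp sg pi) x = act (perm_comp pi t) x.
    by apply: act_ext => b /=; rewrite pinvK.
  rewrite act_comp; congr (act pi _).
  apply: supp_supports => b Hb /=.
  by rewrite Hsg ?pfunK // map_f.
by case/mapP: (supp_least Hsupports Ha) => b Hb ->; rewrite pfunK.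
Qed.

Lemma size_supp_act_le (X : nominal) (pi : fperm) (x : X) :
  size (supp (act pi x)) <= size (supp x).
Proof.
rewrite -(size_map pi (supp x)).
apply: uniq_leq_size; first exact: supp_uniq.
move=> a Ha; apply/mapP; exists (pinv pi a); first exact: supp_act.
by rewrite pinvK.
Qed.

Lemma size_supp_act (X : nominal) (pi : fperm) (x : X) :
  size (supp (act pi x)) = size (supp x).
Proof.
apply/eqP; rewrite eqn_leq size_supp_act_le /=.
have {1}-> : x = act (perm_inv pi) (act pi x).
  by rewrite -act_comp -{1}(act_id x); apply: act_ext => b /=; rewrite pfunK.
exact: size_supp_act_le.
Qed.

Lemma supp_equivariant (X Y : nominal) (f : X -> Y) (ef : equivariant f) x a :
  a \in supp (f x) -> a \in supp x.
Proof.
by apply: supp_least => sg Hsg; rewrite -ef; congr f; apply: supp_supports.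
Qed.

Definition swapf (b c x : nat) := if x == b then c else if x == c then b else x.

Lemma swapfK b c : cancel (swapf b c) (swapf b c).
Proof.
move=> x; rewrite /swapf.
case: (eqVneq x b) => [->|hb]; first by rewrite eqxx; case: eqVneq.
case: (eqVneq x c) => [->|hc]; first by rewrite eqxx.
by rewrite (negbTE hb) (negbTE hc).
Qed.

Lemma swapf_fin b c : exists n, forall a, n <= a -> swapf b c a = a.
Proof.
exists (maxn b c).+1 => a Ha; rewrite /swapf.
have hb : a != b by apply/eqP => E; move: Ha; rewrite E ltnNge leq_maxl.
have hc : a != c by apply/eqP => E; move: Ha; rewrite E ltnNge leq_maxr.
by rewrite (negbTE hb) (negbTE hc).
Qed.

Definition swap b c : fperm :=
  @FPerm (swapf b c) (swapf b c) (swapfK b c) (swapfK b c) (swapf_fin b c).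

Lemma swap_fresh (X : nominal) (x : X) b c :
  b \notin supp x -> c \notin supp x -> act (swap b c) x = x.
Proof.
move=> bx cx; apply: supp_supports => a Ha /=; rewrite /swapf.
case: eqVneq => [E|_]; first by move: bx; rewrite -E Ha.
by case: eqVneq => [E|_] //; move: cx; rewrite -E Ha.
Qed.

Lemma fresh_name (s : seq nat) : exists c, c \notin s.
Proof.
exists (\max_(a <- s) a).+1; apply/negP => Hs.
by have := @leq_bigmax_seq _ s predT id _ Hs isT; rewrite ltnn.
Qed.

(* Strengthening a predicate strictly at some element of s strictly raises
   its count; this is the termination measure of the renaming. *)
Lemma count_lt (T : eqType) (P P' : pred T) (s : seq T) :
  (forall x, P x -> P' x) -> (exists2 x, x \in s & P' x && ~~ P x) ->
  count P s < count P' s.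
Proof.
move=> HP; elim: s => [|y s IH] [x] //.
rewrite inE => /orP [/eqP ->|Hx] Hxp /=.
  case/andP: Hxp => -> /negbTE ->; rewrite add0n add1n ltnS.
  exact: sub_count.
rewrite -addnS; apply: leq_add; last by apply: IH; exists x.
by case Py: (P y) => //; rewrite (HP _ Py).
Qed.

Section Renaming.
Variables (Y A B : nominal) (q : Y -> A) (k : Y -> B).
Hypotheses (eq_ : equivariant q) (ek : equivariant k).
Variable U : seq nat.

Definition hidden (y : Y) (a : nat) :=
  [&& a \in supp y, a \notin supp (q y) & a \notin supp (k y)].

(* Swapping a hidden name b of y with a fresh name removes b from the hidden
   names lying in U, creates no new ones, and keeps q y, k y and |supp y|. *)
Lemma rename_one y b : b \in U -> hidden y b ->
  exists y', [/\ q y' = q y, k y' = k y, size (supp y') = size (supp y) &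
    count (hidden y') U < count (hidden y) U].
Proof.
move=> bU /and3P [by_ bq bk].
have [c] := fresh_name (U ++ supp y ++ supp (q y) ++ supp (k y)).
rewrite !mem_cat !negb_or => /and4P [cU cy cq ck].
set y' := act (swap b c) y.
have qy' : q y' = q y by rewrite /y' eq_ swap_fresh.
have ky' : k y' = k y by rewrite /y' ek swap_fresh.
have hidden_old a : a \in U -> hidden y' a -> hidden y a && (a != b).
  move=> aU /and3P [Ha Haq Hak]; have := supp_act Ha; rewrite /= /swapf.
  case: eqVneq => [_|hb]; first by rewrite (negbTE cy).
  case: eqVneq => [E|_] Hy; first by move: cU; rewrite -E aU.
  by rewrite /hidden Hy -qy' -ky' Haq Hak.
exists y'; split => //; first exact: size_supp_act.
apply: (@leq_trans (count (fun a => hidden y a && (a != b)) U).+1).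
  rewrite ltnS (@eq_in_count _ _ (fun a => (a \in U) && hidden y' a)); last first.
    by move=> a ->.
  by apply: sub_count => a /andP [aU] /(hidden_old a aU).
apply: count_lt; first by move=> a /andP [].
by exists b => //; rewrite /hidden by_ bq bk eqxx.
Qed.

Lemma rename_hidden y : exists y',
  [/\ q y' = q y, k y' = k y, size (supp y') = size (supp y) &
    forall a, a \in U -> ~~ hidden y' a].
Proof.
move: {2}(count (hidden y) U) (leqnn (count (hidden y) U)) => n.
elim: n y => [|n IH] y Hn.
  exists y; split => // a aU; apply: contraTN Hn => Ha; rewrite -ltnNge.
  by rewrite -has_count; apply/hasP; exists a.
case: (boolP (has (hidden y) U)) => [/hasP [b bU Hb]|/hasPn Hnone].
  have [y1 [q1 k1 s1 lt1]] := rename_one bU Hb.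
  have [y' [q' k' s' H']] := IH y1 (leq_trans lt1 Hn).
  by exists y'; split; rewrite ?q' ?k' ?s'.
by exists y.
Qed.
End Renaming.

(* Safety is inherited along fibre inclusion: a (g o f)-safe element is
   f-safe. *)
Lemma fsafe_comp_l (X Y W : nominal) (f : X -> Y) (g : Y -> W) u :
  fsafe (fun x => g (f x)) u -> fsafe f u.
Proof. by move=> Hu w Hw; apply: Hu; rewrite Hw. Qed.

Lemma fsafe_transfer (X Y : nominal) (f : X -> Y) (u u' : X) :
  fsafe f u -> f u' = f u -> size (supp u') = size (supp u) -> fsafe f u'.
Proof. by move=> Hu Hf Hs w Hw; rewrite Hs; apply: Hu; rewrite Hw. Qed.

Lemma bv_comp_r (X Y W : nominal) (f : X -> Y) (g : Y -> W) (ef : equivariant f) u n :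
  n \in bv g (f u) -> n \in bv (fun x => g (f x)) u.
Proof.
rewrite !mem_filter => /andP [Hn Hfu].
by rewrite Hn (supp_equivariant ef Hfu).
Qed.

Lemma bv_comp_l (X Y W : nominal) (f : X -> Y) (g : Y -> W) (eg : equivariant g) u n :
  n \in bv f u -> n \in bv (fun x => g (f x)) u.
Proof.
rewrite !mem_filter => /andP [Hn Hu]; rewrite Hu andbT.
by apply: contra Hn; apply: supp_equivariant.
Qed.

Theorem lemma5p40 (X1 X2 Y1 Y2 W1 W2 : nominal)
  (p : X2 -> X1) (q : Y2 -> Y1) (s : W2 -> W1)
  (f : X1 -> Y1) (g : Y1 -> W1) (h : X2 -> Y2) (k : Y2 -> W2)
  (ep : equivariant p) (eq_ : equivariant q) (es : equivariant s)
  (ef : equivariant f) (eg : equivariant g) (eh : equivariant h) (ek : equivariant k)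
  (sq1c : forall x, f (p x) = q (h x))
  (sq2c : forall y, g (q y) = s (k y))
  (sq1 : safe_square p f h q)
  (sq2 : safe_square q g k s)
  (fw : forward_safe f g)
  (bw : backward_safe h k) :
  safe_square p (fun x => g (f x)) (fun x => k (h x)) s.
Proof.
split=> [x|u v Hu Heq Hbv]; first by rewrite sq1c sq2c.
have uf := fsafe_comp_l Hu.
have [_ _ /(_ u Hu) fug] := fw.
have [y [ky qy vy]] : exists y, [/\ fsafe k y, q y = f u & k y = v].
  by apply: sq2.2 => // n /(bv_comp_r ef); apply: Hbv.
have [y' [qy' ky' sy' Hy']] := rename_hidden eq_ ek (supp u) y.
have [z [hz pz hz']] : exists z, [/\ fsafe h z, p z = u & h z = y'].
  apply: sq1.2 => //; first by rewrite qy' qy.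
  move=> n Hn; have /Hbv Hnv := bv_comp_l eg Hn.
  move: Hn Hy'; rewrite mem_filter => /andP [Hnfu Hnu] /(_ n Hnu).
  by rewrite /hidden qy' qy ky' vy (negbTE Hnfu) (negbTE Hnv) !andbT.
exists z; split => //; last by rewrite hz' ky'.
have [_ _ Hbw] := bw; apply: Hbw => //.
by rewrite hz'; apply: fsafe_transfer ky ky' sy'.
Qed.
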